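(* Let $p,q\ge 2$ be relatively prime integers, and let $\omega_j=e^{2\pi i j/p}$ and $\xi_j=e^{2\pi i j/q}$. Then $$p\sum_{j=1}^{q-1}\frac{\xi_j}{(\xi_j-1)^3(\xi_j^p-1)}+q\sum_{j=1}^{p-1}\frac{\omega_j}{(\omega_j-1)^3(\omega_j^q-1)}=\frac{1}{720}\left(p^4+q^4-5p^2q^2-15p^2q-15pq^2+15p+15q+3\right).$$ *)

From Stdlib Require Import Reals.
From mathcomp Require Import all_boot all_algebra complex.
From mathcomp Require Import Rstruct.
Set Implicit Arguments. Unset Strict Implicit. Unset Printing Implicit Defensive.
Import GRing.Theory Num.Theory.
Local Open Scope ring_scope.

(* e^{2 pi i j / n} = cos(2 pi j/n) + i sin(2 pi j/n) *)
Definition root_e (n j : nat) : R[i] :=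
  Complex (Rtrigo_def.cos (2 * PI * INR j / INR n)%R)
          (Rtrigo_def.sin (2 * PI * INR j / INR n)%R).

From Stdlib Require Import Reals Lra.
From mathcomp Require Import all_boot all_algebra complex.
From mathcomp Require Import Rstruct ring.
Set Implicit Arguments. Unset Strict Implicit. Unset Printing Implicit Defensive.
Import GRing.Theory Num.Theory.

(* Let E = (X^q - 1)(X^p - 1)/(X - 1)^2 = prod_r (X - r), r ranging over the
   nontrivial q-th and p-th roots of unity, which are distinct since p and q are
   coprime.  Partial fractions give 1/E(x) = sum_r 1/(E'(r) (x - r)), so the
   coefficient of t^4 in 1/E(1 + t) is sum_r 1/(E'(r) (1 - r)^5); at a q-th root
   r = xi one has E'(xi) = q xi^(q-1) (xi^p - 1)/(xi - 1)^2, which turns that sum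
   into -(1/pq) times the left-hand side.  On the other hand
   E(1 + t) = B_p(t) B_q(t) with B_n(t) = ((1 + t)^n - 1)/t = sum_k C(n, k+1) t^k,
   and inverting this power series up to order 4 gives the polynomial in p, q. *)

Section RealCircle.
Local Open Scope R_scope.

Lemma not_cos1_sin0 x : 0 < x < 2 * PI -> ~ (cos x = 1 /\ sin x = 0).
Proof.
move=> [x_gt0 x_lt2PI] [cosx1 sinx0].
case: (Rtotal_order x PI) => [x_ltPI | [x_PI | x_gtPI]].
- by have := sin_gt_0 _ x_gt0 x_ltPI; rewrite sinx0; lra.
- by move: cosx1; rewrite x_PI cos_PI; lra.
- by have := sin_lt_0 _ x_gtPI x_lt2PI; rewrite sinx0; lra.
Qed.

End RealCircle.

Local Open Scope ring_scope.

Lemma root_angle_bounds n k : (0 < k < n)%N ->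
  0 < 2 * PI * INR k / INR n < 2 * PI.
Proof.
case/andP=> k_gt0 k_lt_n.
have twoPI_gt0 : 0 < 2 * PI by rewrite mulr_gt0 //; apply/RltP; exact: PI_RGT_0.
have n_gt0 : (0 < n)%N by apply: leq_trans k_lt_n.
rewrite !INRE -mulrA pmulr_rgt0 // gtr_pMr // divr_gt0 ?ltr0n //=.
by rewrite ltr_pdivrMr ?ltr0n // mul1r ltr_nat.
Qed.

Lemma root_e0 n : root_e n 0 = 1.
Proof. by rewrite /root_e mulr0 mul0r cos_0 sin_0. Qed.

Lemma root_eD n i j : root_e n (i + j) = root_e n i * root_e n j.
Proof.
rewrite /root_e plus_INR !INRE mulrDr mulrDl.
by rewrite cos_plus sin_plus /=; congr Complex; rewrite addrC.
Qed.

Lemma root_eX n j : root_e n j = root_e n 1 ^+ j.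
Proof.
elim: j => [|j IHj]; first by rewrite root_e0.
by rewrite -addn1 root_eD IHj exprD expr1.
Qed.

Lemma root_e_id n : (0 < n)%N -> root_e n n = 1.
Proof.
move=> n_gt0; rewrite /root_e mulfK ?cos_2PI ?sin_2PI //.
by rewrite INRE pnatr_eq0 -lt0n.
Qed.

Lemma root_e_neq1 n k : (0 < k < n)%N -> root_e n k != 1.
Proof.
case/root_angle_bounds/andP => /RltP angle_gt0 /RltP angle_lt2PI.
apply/eqP => -[cos1 sin0].
exact: (not_cos1_sin0 (conj angle_gt0 angle_lt2PI) (conj cos1 sin0)).
Qed.

Lemma prim_root_e n : (0 < n)%N -> n.-primitive_root (root_e n 1).
Proof.
move=> n_gt0; apply/andP; split=> //; apply/forallP => i.
rewrite unity_rootE -root_eX.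
have [->|i1_neq_n] := eqVneq i.+1 n; first by rewrite root_e_id // !eqxx.
by rewrite (negbTE (root_e_neq1 _)) //= ltn_neqAle i1_neq_n ltn_ord.
Qed.

Section PartialFractions.
Variable F : fieldType.
Implicit Types (rs : seq F) (a c r : F).

Definition lagrange_factor rs r : {poly F} := \prod_(s <- rs | s != r) ('X - s%:P).

Lemma root_lagrange_factor rs r s : s \in rs -> s != r -> root (lagrange_factor rs r) s.
Proof.
move=> s_rs s_neq_r; rewrite rootE horner_prod prodf_seq_eq0.
by apply/hasP; exists s => //; rewrite s_neq_r hornerXsubC subrr eqxx.
Qed.

Lemma horner_lagrange_factor_neq0 rs r : (lagrange_factor rs r).[r] != 0.
Proof.
rewrite horner_prod prodf_seq_neq0; apply/allP => s _; apply/implyP => s_neq_r.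
by rewrite hornerXsubC subr_eq0 eq_sym.
Qed.

Lemma size_lagrange_factor rs r : uniq rs -> r \in rs ->
  size (lagrange_factor rs r) = size rs.
Proof.
move=> rs_uniq r_rs; rewrite /lagrange_factor -big_filter size_prod_XsubC size_filter.
by rewrite -(count_predC (pred1 r)) count_uniq_mem // r_rs add1n.
Qed.

Lemma sum_lagrange_factor rs : uniq rs -> rs != [::] ->
  \sum_(r <- rs) (lagrange_factor rs r).[r]^-1 *: lagrange_factor rs r = 1.
Proof.
move=> rs_uniq rs_neq0; apply/eqP; rewrite -subr_eq0; apply/eqP.
apply: (roots_geq_poly_eq0 _ rs_uniq).
- apply/allP => s s_rs; rewrite rootE !hornerE horner_sum (bigD1_seq s) //=.
  rewrite big1 => [|r r_neq_s].
    by rewrite hornerZ mulVf ?horner_lagrange_factor_neq0 ?addr0 ?subrr.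
  by rewrite hornerZ (eqP (root_lagrange_factor s_rs _)) ?mulr0 // eq_sym.
- rewrite (leq_trans (size_polyD _ _)) // size_polyN size_poly1 geq_max.
  rewrite lt0n size_eq0 rs_neq0 andbT (leq_trans (size_sum _ _ _)) //.
  apply/bigmax_leqP_seq => r r_rs _.
  by rewrite (leq_trans (size_scale_leq _ _)) // size_lagrange_factor.
Qed.

Definition trunc_inv_XaddC n a : {poly F} := a^-1 *: \sum_(k < n) (- a^-1 *: 'X) ^+ k.

Lemma trunc_inv_XaddCM n a : a != 0 ->
  trunc_inv_XaddC n a * ('X + a%:P) = 1 - (- a^-1) ^+ n *: 'X^n.
Proof.
move=> a_neq0; have -> : 'X + a%:P = a *: (1 - (- a^-1) *: 'X).
  by rewrite scalerBr scaleNr scalerN scalerA mulfV // scale1r opprK alg_polyC addrC.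
rewrite /trunc_inv_XaddC -scalerAr -scalerAl scalerA mulfV // scale1r mulrC.
rewrite -exprZn -[in RHS](expr1n _ n) subrXX; congr (_ * _).
by apply: eq_bigr => i _; rewrite expr1n mul1r.
Qed.

Lemma coef_trunc_inv_XaddC n a k : (k < n)%N ->
  (trunc_inv_XaddC n a)`_k = (- 1) ^+ k / a ^+ k.+1.
Proof.
move=> k_lt_n; rewrite coefZ coef_sum (bigD1 (Ordinal k_lt_n)) //= big1 => [|i i_neq_k].
  by rewrite addr0 exprZn coefZ coefXn eqxx mulr1 [in LHS]exprNn exprVn exprS invfM mulrCA.
by rewrite exprZn coefZ coefXn eq_sym (negbTE (i_neq_k : i != k :> nat)) mulr0.
Qed.

(* The expansion at c, truncated at order n, of 1/E = sum_r 1/(E'(r) (X - r))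
   where E = prod_(r <- rs) (X - r); note that E'(r) = (lagrange_factor rs r).[r]. *)
Definition pfrac_series n c rs : {poly F} :=
  \sum_(r <- rs) (lagrange_factor rs r).[r]^-1 *: trunc_inv_XaddC n (c - r).

Lemma coef_pfrac_series n c rs k : (k < n)%N ->
  (pfrac_series n c rs)`_k
    = (- 1) ^+ k * \sum_(r <- rs) ((lagrange_factor rs r).[r] * (c - r) ^+ k.+1)^-1.
Proof.
move=> k_lt_n; rewrite coef_sum mulr_sumr; apply: eq_bigr => r _.
by rewrite coefZ coef_trunc_inv_XaddC // invfM mulrCA.
Qed.

Lemma coef_pfrac_seriesM n c rs k :
  uniq rs -> rs != [::] -> c \notin rs -> (k < n)%N ->
  (pfrac_series n c rs * ((\prod_(r <- rs) ('X - r%:P)) \Po ('X + c%:P)))`_k = (k == 0)%:R.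
Proof.
move=> rs_uniq rs_neq0 c_notin_rs k_lt_n.
pose W := \sum_(r <- rs) ((lagrange_factor rs r).[r]^-1 * (- (c - r)^-1) ^+ n)
            *: (lagrange_factor rs r \Po ('X + c%:P)).
set E := \prod_(r <- rs) ('X - r%:P).
suff -> : pfrac_series n c rs * (E \Po ('X + c%:P))
    = \sum_(r <- rs) ((lagrange_factor rs r).[r]^-1 *: lagrange_factor rs r \Po ('X + c%:P))
      - 'X^n * W.
  have := congr1 (comp_poly ('X + c%:P)) (sum_lagrange_factor rs_uniq rs_neq0).
  rewrite linear_sum comp_polyC => ->.
  by rewrite coefB coef1 coefXnM k_lt_n subr0.
rewrite /pfrac_series /W mulr_suml mulr_sumr -sumrB.
apply: eq_big_seq => r r_rs; rewrite /E (bigD1_seq r) //= -/(lagrange_factor rs r).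
rewrite comp_polyM comp_polyB comp_polyX comp_polyC -addrA -polyCB -scalerAl mulrA.
rewrite trunc_inv_XaddCM; last by rewrite subr_eq0; apply: contraNneq c_notin_rs => ->.
by rewrite mulrBl mul1r comp_polyZ scalerBr -scalerAl -scalerAr scalerA.
Qed.

Lemma horner_lagrange_factor_unity rs r n (G H : {poly F}) :
  uniq rs -> r \in rs -> r ^+ n = 1 ->
  \prod_(s <- rs) ('X - s%:P) * G = ('X^n - 1) * H ->
  (lagrange_factor rs r).[r] * G.[r] = n%:R * r ^+ n.-1 * H.[r].
Proof.
move=> rs_uniq r_rs rn_eq1 defG.
have XnB1 : 'X^n - 1 = ('X - r%:P) * \sum_(i < n) 'X ^+ (n.-1 - i) * r%:P ^+ i.
  by rewrite -subrXX -rmorphXn /= rn_eq1 polyC1.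
rewrite (bigD1_seq r) //= -/(lagrange_factor rs r) XnB1 -!mulrA in defG.
move/(mulfI (negbT (polyXsubC_eq0 r)))/(congr1 (horner^~ r)): defG.
rewrite !hornerM horner_sum => ->; congr (_ * _).
rewrite (eq_bigr (fun _ => r ^+ n.-1)) ?sumr_const ?card_ord ?mulr_natl // => i _.
rewrite hornerM hornerXn -rmorphXn hornerC -exprD subnK //.
by rewrite -ltnS (ltn_predK (ltn_ord i)).
Qed.

Lemma pfrac_term_unity rs r n m :
  uniq rs -> r \in rs -> r ^+ n = 1 -> r != 1 -> r ^+ m != 1 ->
  \prod_(s <- rs) ('X - s%:P) * ('X - 1) ^+ 2 = ('X^n - 1) * ('X^m - 1) ->
  ((lagrange_factor rs r).[r] * (1 - r) ^+ 5)^-1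
    = - (n%:R)^-1 * (r / ((r - 1) ^+ 3 * (r ^+ m - 1))).
Proof.
move=> rs_uniq r_rs rn_eq1 r_neq1 rm_neq1 defE.
have := horner_lagrange_factor_unity rs_uniq r_rs rn_eq1 defE.
rewrite -polyC1 horner_exp hornerXsubC hornerD hornerN hornerXn hornerC.
set L := (lagrange_factor rs r).[r] => defL.
have r1_neq0 : r - 1 != 0 by rewrite subr_eq0.
have rm1_neq0 : r ^+ m - 1 != 0 by rewrite subr_eq0.
(* L (r - 1)^2 != 0 forces n%:R != 0: no assumption on the characteristic is needed. *)
have : n%:R * r ^+ n.-1 * (r ^+ m - 1) != 0.
  by rewrite -defL mulf_neq0 ?expf_neq0 ?horner_lagrange_factor_neq0.
rewrite !mulf_eq0 !negb_or => /andP[/andP[n_neq0 _] _].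
have n_gt0 : (0 < n)%N by case: n n_neq0 {defL rn_eq1 defE}; rewrite ?eqxx.
have r_neq0 : r != 0.
  by apply/eqP => r0; move: rn_eq1; rewrite r0 expr0n gtn_eqF // => /eqP; rewrite eq_sym oner_eq0.
have rn1_inv : r ^+ n.-1 = r^-1 by apply: (mulfI r_neq0); rewrite mulfV // -exprS prednK.
have -> : L = n%:R * r^-1 * (r ^+ m - 1) / (r - 1) ^+ 2.
  by rewrite -rn1_inv -defL mulfK // expf_neq0.
by field; rewrite n_neq0 r_neq0 r1_neq0 rm1_neq0 subr_eq0 eq_sym r_neq1.
Qed.
End PartialFractions.

Section BinomialPoly.
Variable R : idomainType.

Definition binom_poly n : {poly R} := \poly_(k < n) 'C(n, k.+1)%:R.

Lemma coef_binom_poly n k : (binom_poly n)`_k = 'C(n, k.+1)%:R.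
Proof. by rewrite coef_poly; case: ltnP => // n_le_k; rewrite bin_small. Qed.

Lemma mulX_binom_poly n : 'X * binom_poly n = ('X + 1) ^+ n - 1.
Proof.
rewrite /binom_poly exprD1n big_ord_recl expr0 bin0 mulr1n addrC addKr poly_def mulr_sumr.
by apply: eq_bigr => i _; rewrite -scaler_nat -scalerAr exprS.
Qed.

Lemma comp_Xadd1_binom_polyM (E : {poly R}) p q :
  E * ('X - 1) ^+ 2 = ('X^q - 1) * ('X^p - 1) ->
  E \Po ('X + 1) = binom_poly p * binom_poly q.
Proof.
move=> defE; have X2_neq0 : ('X ^+ 2 : {poly R}) != 0 by rewrite expf_neq0 ?polyX_eq0.
have shiftXn n : ('X^n - 1) \Po ('X + 1) = 'X * binom_poly n.
  by rewrite mulX_binom_poly comp_polyB rmorphXn /= comp_polyX comp_polyC.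
apply: (mulIf X2_neq0); have := congr1 (comp_poly ('X + 1)) defE.
rewrite !rmorphM /= !shiftXn comp_polyB comp_polyX comp_polyC addrK => ->.
by rewrite expr2; ring.
Qed.

End BinomialPoly.

Lemma natr_ffact (R : comPzRingType) n k : (n ^_ k)%:R = \prod_(i < k) (n%:R - i%:R) :> R.
Proof.
elim: k => [|k IHk]; first by rewrite ffactn0 big_ord0.
have [k_le_n|n_lt_k] := leqP k n.
  by rewrite ffactnSr natrM IHk big_ord_recr natrB.
have n_lt_k1 : (n < k.+1)%N by apply: ltnW.
by rewrite ffact_small // (bigD1 (Ordinal n_lt_k1)) //= subrr mul0r.
Qed.

Lemma natr_bin (F : numFieldType) n k :
  'C(n, k)%:R = (\prod_(i < k) (n%:R - i%:R)) / k`!%:R :> F.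
Proof. by rewrite -natr_ffact -bin_ffact natrM mulfK // pnatr_eq0 -lt0n fact_gt0. Qed.

Lemma coef_inv_rec (F : fieldType) (U E : {poly F}) k : E`_0 != 0 ->
  (U * E)`_k = (k == 0)%:R ->
  U`_k = ((k == 0)%:R - \sum_(j < k) U`_j * E`_(k - j)) / E`_0.
Proof.
move=> E0_neq0; rewrite coefM big_ord_recr /= subnn => <-.
by rewrite addrAC subrr add0r mulfK.
Qed.

Lemma coef4_inv_binom_polyM (F : numFieldType) p q (U : {poly F}) :
  (0 < p)%N -> (0 < q)%N ->
  (forall k, (k < 5)%N -> (U * (binom_poly F p * binom_poly F q))`_k = (k == 0)%:R) ->
  - (p%:R * q%:R) * U`_4
    = (p%:R ^+ 4 + q%:R ^+ 4 - 5 * p%:R ^+ 2 * q%:R ^+ 2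
       - 15 * p%:R ^+ 2 * q%:R - 15 * p%:R * q%:R ^+ 2
       + 15 * p%:R + 15 * q%:R + 3) / 720.
Proof.
move=> p_gt0 q_gt0 invU; set E := binom_poly F p * binom_poly F q.
have coefE k : E`_k = \sum_(j < k.+1) 'C(p, j.+1)%:R * 'C(q, (k - j).+1)%:R.
  by rewrite coefM; apply: eq_bigr => j _; rewrite !coef_binom_poly.
have p_neq0 : p%:R != 0 :> F by rewrite pnatr_eq0 -lt0n.
have q_neq0 : q%:R != 0 :> F by rewrite pnatr_eq0 -lt0n.
have E0_neq0 : E`_0 != 0 by rewrite coefE big_ord1 !bin1 mulf_neq0.
have coefU k : (k < 5)%N -> U`_k = ((k == 0)%:R - \sum_(j < k) U`_j * E`_(k - j)) / E`_0.
  by move=> k_lt5; apply: coef_inv_rec; rewrite ?invU.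
rewrite (coefU 4%N) // !big_ord_recr big_ord0 /=.
rewrite (coefU 3%N) // !big_ord_recr big_ord0 /=.
rewrite (coefU 2%N) // !big_ord_recr big_ord0 /=.
rewrite (coefU 1%N) // !big_ord_recr big_ord0 /=.
rewrite (coefU 0%N) // big_ord0 /=.
rewrite !coefE !big_ord_recr big_ord0 /= ?subn0 ?subSS ?subnn !natr_bin.
rewrite !big_ord_recr !big_ord0 /= !factS fact0 !natrM.
by field; rewrite p_neq0 q_neq0.
Qed.

Lemma prim_expr_neq1 (R : idomainType) n (x : R) j :
  n.-primitive_root x -> (0 < j < n)%N -> x ^+ j != 1.
Proof. by move=> x_prim /andP[j_gt0 j_lt_n]; rewrite -(prim_order_dvd x_prim) gtnNdvd. Qed.

Lemma prim_exprM_neq1 (R : idomainType) n m (x : R) j :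
  n.-primitive_root x -> coprime n m -> (0 < j < n)%N -> (x ^+ j) ^+ m != 1.
Proof.
move=> x_prim nm_coprime /andP[j_gt0 j_lt_n].
by rewrite -exprM -(prim_order_dvd x_prim) Gauss_dvdl // gtnNdvd.
Qed.

Section CoprimeRootsOfUnity.
Variable F : numFieldType.
Variables (p q : nat) (z w : F).
Hypotheses (p_gt1 : (1 < p)%N) (q_gt1 : (1 < q)%N) (pq_coprime : coprime p q).
Hypotheses (z_prim : q.-primitive_root z) (w_prim : p.-primitive_root w).

Definition pq_roots :=
  [seq z ^+ j | j <- index_iota 1 q] ++ [seq w ^+ j | j <- index_iota 1 p].

Lemma pq_roots_uniq : uniq pq_roots.
Proof.
have expr_inj n (x : F) :
    n.-primitive_root x -> {in index_iota 1 n &, injective (GRing.exp x)}.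
  move=> x_prim i j; rewrite !mem_index_iota => /andP[_ i_lt_n] /andP[_ j_lt_n] /eqP.
  by rewrite (eq_prim_root_expr x_prim) !modn_small // => /eqP.
rewrite cat_uniq (map_inj_in_uniq (expr_inj _ _ z_prim)).
rewrite (map_inj_in_uniq (expr_inj _ _ w_prim)) !iota_uniq andbT /=.
apply/hasPn => _ /mapP[k + ->]; rewrite mem_index_iota => k_range.
apply/mapP => -[j _ wk_eq_zj].
have := prim_exprM_neq1 w_prim pq_coprime k_range.
by rewrite wk_eq_zj exprAC (prim_expr_order z_prim) expr1n eqxx.
Qed.

Lemma pq_roots_neq_nil : pq_roots != [::].
Proof. by rewrite -size_eq0 size_cat !size_map !size_iota -lt0n addn_gt0 subn_gt0 q_gt1. Qed.

Lemma one_notin_pq_roots : 1 \notin pq_roots.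
Proof.
rewrite mem_cat negb_or; apply/andP; split; apply/mapP => -[j + /eqP];
  rewrite mem_index_iota eq_sym => j_range; apply/negP.
- exact: prim_expr_neq1 z_prim j_range.
- exact: prim_expr_neq1 w_prim j_range.
Qed.

Lemma prod_pq_roots :
  \prod_(r <- pq_roots) ('X - r%:P) * ('X - 1) ^+ 2 = ('X^q - 1) * ('X^p - 1).
Proof.
rewrite -(factor_Xn_sub_1 z_prim) -(factor_Xn_sub_1 w_prim).
rewrite (big_ltn (ltnW q_gt1)) (big_ltn (ltnW p_gt1)) !expr0 big_cat !big_map /= polyC1.
by rewrite expr2; ring.
Qed.

Lemma prim_roots_sum_formula :
  p%:R * (\sum_(1 <= j < q) z ^+ j / ((z ^+ j - 1) ^+ 3 * ((z ^+ j) ^+ p - 1)))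
  + q%:R * (\sum_(1 <= j < p) w ^+ j / ((w ^+ j - 1) ^+ 3 * ((w ^+ j) ^+ q - 1)))
  = (p%:R ^+ 4 + q%:R ^+ 4 - 5 * p%:R ^+ 2 * q%:R ^+ 2
     - 15 * p%:R ^+ 2 * q%:R - 15 * p%:R * q%:R ^+ 2
     + 15 * p%:R + 15 * q%:R + 3) / 720.
Proof.
have invU k : (k < 5)%N ->
    (pfrac_series 5 1 pq_roots * (binom_poly F p * binom_poly F q))`_k = (k == 0)%:R.
  move=> k_lt5; rewrite -(comp_Xadd1_binom_polyM prod_pq_roots) -polyC1.
  exact: coef_pfrac_seriesM pq_roots_uniq pq_roots_neq_nil one_notin_pq_roots k_lt5.
rewrite -(coef4_inv_binom_polyM (ltnW p_gt1) (ltnW q_gt1) invU) coef_pfrac_series //.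
rewrite -signr_odd /= expr0 mul1r big_cat !big_map mulrDr.
have p_neq0 : p%:R != 0 :> F by rewrite pnatr_eq0 -lt0n ltnW.
have q_neq0 : q%:R != 0 :> F by rewrite pnatr_eq0 -lt0n ltnW.
congr (_ + _); rewrite !mulr_sumr; apply: eq_big_seq => j; rewrite mem_index_iota => j_range.
- have zj_neq1 := prim_expr_neq1 z_prim j_range.
  have zjp_neq1 : (z ^+ j) ^+ p != 1.
    by apply: prim_exprM_neq1 z_prim _ j_range; rewrite coprime_sym.
  rewrite (pfrac_term_unity pq_roots_uniq _ _ zj_neq1 zjp_neq1 prod_pq_roots).
  + by field; rewrite !subr_eq0 zjp_neq1 zj_neq1 q_neq0.
  + by rewrite mem_cat map_f // mem_index_iota.
  + by rewrite exprAC (prim_expr_order z_prim) expr1n.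
- have wj_neq1 := prim_expr_neq1 w_prim j_range.
  have wjq_neq1 := prim_exprM_neq1 w_prim pq_coprime j_range.
  have prod_pq_roots' := etrans prod_pq_roots (mulrC _ _).
  rewrite (pfrac_term_unity pq_roots_uniq _ _ wj_neq1 wjq_neq1 prod_pq_roots').
  + by field; rewrite !subr_eq0 wjq_neq1 wj_neq1 p_neq0.
  + by rewrite mem_cat orbC map_f // mem_index_iota.
  + by rewrite exprAC (prim_expr_order w_prim) expr1n.
Qed.

End CoprimeRootsOfUnity.

Theorem mainTheorem9 (p q : nat) (hp : (2 <= p)%N) (hq : (2 <= q)%N)
  (hpq : coprime p q) :
  p%:R * (\sum_(1 <= j < q)
            root_e q j / ((root_e q j - 1) ^+ 3 * (root_e q j ^+ p - 1)))
  + q%:R * (\sum_(1 <= j < p)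
            root_e p j / ((root_e p j - 1) ^+ 3 * (root_e p j ^+ q - 1)))
  = ((p%:R ^+ 4 + q%:R ^+ 4 - 5 * p%:R ^+ 2 * q%:R ^+ 2
      - 15 * p%:R ^+ 2 * q%:R - 15 * p%:R * q%:R ^+ 2
      + 15 * p%:R + 15 * q%:R + 3) / 720 : R[i]).
Proof.
rewrite -(prim_roots_sum_formula hp hq hpq (prim_root_e (ltnW hq)) (prim_root_e (ltnW hp))).
by congr (_ * _ + _ * _); apply: eq_bigr => j _; rewrite [root_e _ j]root_eX.
Qed.
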